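(* Let $(\mathcal C,\otimes,I,a,l,r)$ be a monoidal category, let $(F,\Delta,\varepsilon,F_2,F_0)$ and $(G,\delta,\epsilon,G_2,G_0)$ be bicomonads on $\mathcal C$, and let $\varphi:FG\to GF$ be a comonad distributive law. For $\varphi$-bicomodules $(X,\theta^X,\rho^X)$ and $(Y,\theta^Y,\rho^Y)$ define on $X\otimes Y$ the $F$-coaction $\theta^{X\otimes Y}=F_2(X,Y)\circ(\theta^X\otimes\theta^Y)$ and the $G$-coaction $\rho^{X\otimes Y}=G_2(X,Y)\circ(\rho^X\otimes\rho^Y)$, and give $I$ the coactions $F_0$ and $G_0$. Then $(\mathcal C^{(F,G)}(\varphi),\otimes,I,a,l,r)$ is a monoidal category (with these structures) if and only if for all objects $M,N$ of $\mathcal C$: (a) $\varphi_{M\otimes N}\circ F(G_2(M,N))\circ F_2(GM,GN)=G(F_2(M,N))\circ G_2(FM,FN)\circ(\varphi_M\otimes\varphi_N)$; (b) $\varphi_I\circ F(G_0)\circ F_0=G(F_0)\circ G_0$.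
   Context: A comonad $(F,\Delta,\varepsilon)$ on a category $\mathcal C$ is an endofunctor $F$ with natural transformations $\Delta:F\to FF$, $\varepsilon:F\to \mathrm{id}$ such that $F\Delta\circ\Delta=\Delta F\circ\Delta$ and $F\varepsilon\circ\Delta=\varepsilon F\circ\Delta=\mathrm{id}_F$. An $F$-comodule is a pair $(X,\theta^X)$ with $\theta^X:X\to FX$, $F\theta^X\circ\theta^X=\Delta_X\circ\theta^X$, $\varepsilon_X\circ\theta^X=\mathrm{id}_X$. For comonads $(F,\Delta,\varepsilon)$, $(G,\delta,\epsilon)$, a comonad distributive law is a natural transformation $\varphi:FG\to GF$ with $G\varphi\circ\varphi G\circ F\delta=\delta F\circ\varphi$, $\varphi F\circ F\varphi\circ\Delta G=G\Delta\circ\varphi$, $G\varepsilon\circ\varphi=\varepsilon G$, $\epsilon F\circ\varphi=F\epsilon$. A $\varphi$-bicomodule is a triple $(M,\theta^M,\rho^M)$ with $(M,\theta^M)$ an $F$-comodule, $(M,\rho^M)$ a $G$-comodule and $\varphi_M\circ F(\rho^M)\circ\theta^M=G(\theta^M)\circ\rho^M$; morphisms are maps that are both $F$- and $G$-comodule maps; this category is $\mathcal C^{(F,G)}(\varphi)$. A bicomonad on a monoidal category is a comonad $(G,\delta,\epsilon)$ which is also a monoidal functor $(G,G_2,G_0)$ (natural $G_2(X,Y):GX\otimes GY\to G(X\otimes Y)$, morphism $G_0:I\to GI$, satisfying the usual associativity and unit coherence with $a,l,r$) such that $G(G_2(X,Y))\circ G_2(GX,GY)\circ(\delta_X\otimes\delta_Y)=\delta_{X\otimes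 Y}\circ G_2(X,Y)$, $\epsilon_{X\otimes Y}\circ G_2(X,Y)=\epsilon_X\otimes\epsilon_Y$, $G(G_0)\circ G_0=\delta_I\circ G_0$, $\epsilon_I\circ G_0=\mathrm{id}_I$. *)

Set Implicit Arguments.
Unset Strict Implicit.

Record Category := {
  Ob :> Type;
  Hom : Ob -> Ob -> Type;
  idm : forall A, Hom A A;
  comp : forall A B D, Hom B D -> Hom A B -> Hom A D;
  comp_idl : forall A B (f : Hom A B), comp (idm B) f = f;
  comp_idr : forall A B (f : Hom A B), comp f (idm A) = f;
  comp_assoc : forall A B D E (h : Hom D E) (g : Hom B D) (f : Hom A B),
      comp h (comp g f) = comp (comp h g) f }.
Arguments Hom {c} _ _.
Arguments idm {c} A.
Arguments comp {c A B D} _ _.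
Infix "∘" := comp (at level 40, left associativity).

Record Functor (C D : Category) := {
  fobj :> C -> D;
  fmap : forall A B, Hom A B -> Hom (fobj A) (fobj B);
  fmap_id : forall A, fmap (idm A) = idm (fobj A);
  fmap_comp : forall A B E (g : Hom B E) (f : Hom A B),
      fmap (g ∘ f) = fmap g ∘ fmap f }.
Arguments fmap {C D} f0 {A B} _.

Record MonoidalCategory := {
  mcat :> Category;
  tens : mcat -> mcat -> mcat;
  tensm : forall A A' B B', Hom A A' -> Hom B B' -> Hom (tens A B) (tens A' B');
  tensm_id : forall A B, tensm (idm A) (idm B) = idm (tens A B);
  tensm_comp : forall A A' A'' B B' B'' (f : Hom A A') (f' : Hom A' A'')
      (g : Hom B B') (g' : Hom B' B''),
      tensm (f' ∘ f) (g' ∘ g) = tensm f' g' ∘ tensm f g;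
  munit : mcat;
  assoc : forall A B D, Hom (tens (tens A B) D) (tens A (tens B D));
  assoc_inv : forall A B D, Hom (tens A (tens B D)) (tens (tens A B) D);
  assoc_iso1 : forall A B D, assoc_inv A B D ∘ assoc A B D = idm _;
  assoc_iso2 : forall A B D, assoc A B D ∘ assoc_inv A B D = idm _;
  assoc_nat : forall A A' B B' D D' (f : Hom A A') (g : Hom B B') (h : Hom D D'),
      assoc A' B' D' ∘ tensm (tensm f g) h = tensm f (tensm g h) ∘ assoc A B D;
  lunit : forall A, Hom (tens munit A) A;
  lunit_inv : forall A, Hom A (tens munit A);
  lunit_iso1 : forall A, lunit_inv A ∘ lunit A = idm _;
  lunit_iso2 : forall A, lunit A ∘ lunit_inv A = idm _;
  lunit_nat : forall A A' (f : Hom A A'), f ∘ lunit A = lunit A' ∘ tensm (idm munit) f;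
  runit : forall A, Hom (tens A munit) A;
  runit_inv : forall A, Hom A (tens A munit);
  runit_iso1 : forall A, runit_inv A ∘ runit A = idm _;
  runit_iso2 : forall A, runit A ∘ runit_inv A = idm _;
  runit_nat : forall A A' (f : Hom A A'), f ∘ runit A = runit A' ∘ tensm f (idm munit);
  pentagon : forall A B D E,
      tensm (idm A) (assoc B D E) ∘ assoc A (tens B D) E ∘ tensm (assoc A B D) (idm E)
      = assoc A B (tens D E) ∘ assoc (tens A B) D E;
  triangle : forall A B,
      tensm (idm A) (lunit B) ∘ assoc A munit B = tensm (runit A) (idm B) }.
Arguments tens {m} _ _.
Arguments tensm {m A A' B B'} _ _.
Arguments munit {m}.
Arguments assoc {m} A B D.
Arguments assoc_inv {m} A B D.
Arguments lunit {m} A.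
Arguments lunit_inv {m} A.
Arguments runit {m} A.
Arguments runit_inv {m} A.
Infix "⊗" := tens (at level 35, right associativity).

Record Comonad (C : Category) := {
  cfun :> Functor C C;
  cdelta : forall X, Hom (cfun X) (cfun (cfun X));
  ceps : forall X, Hom (cfun X) X;
  cdelta_nat : forall X Y (f : Hom X Y),
      cdelta Y ∘ fmap cfun f = fmap cfun (fmap cfun f) ∘ cdelta X;
  ceps_nat : forall X Y (f : Hom X Y), ceps Y ∘ fmap cfun f = f ∘ ceps X;
  ccoassoc : forall X, fmap cfun (cdelta X) ∘ cdelta X = cdelta (cfun X) ∘ cdelta X;
  ccounit_l : forall X, fmap cfun (ceps X) ∘ cdelta X = idm (cfun X);
  ccounit_r : forall X, ceps (cfun X) ∘ cdelta X = idm (cfun X) }.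
Arguments cdelta {C} c X.
Arguments ceps {C} c X.

Definition is_comodule (C : Category) (F : Comonad C) (X : C) (th : Hom X (F X)) : Prop :=
  fmap F th ∘ th = cdelta F X ∘ th /\ ceps F X ∘ th = idm X.

Arguments is_comodule {C} F {X} th.

Definition is_comodule_map (C : Category) (F : Comonad C) (X Y : C)
    (thX : Hom X (F X)) (thY : Hom Y (F Y)) (f : Hom X Y) : Prop :=
  fmap F f ∘ thX = thY ∘ f.
Arguments is_comodule_map {C F X Y} thX thY f.

Record DistLaw (C : Category) (F G : Comonad C) := {
  dlaw : forall X, Hom (F (G X)) (G (F X));
  dlaw_nat : forall X Y (f : Hom X Y),
      dlaw Y ∘ fmap F (fmap G f) = fmap G (fmap F f) ∘ dlaw X;
  dlaw_delta : forall X,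
      fmap G (dlaw X) ∘ dlaw (G X) ∘ fmap F (cdelta G X) = cdelta G (F X) ∘ dlaw X;
  dlaw_Delta : forall X,
      dlaw (F X) ∘ fmap F (dlaw X) ∘ cdelta F (G X) = fmap G (cdelta F X) ∘ dlaw X;
  dlaw_varepsilon : forall X, fmap G (ceps F X) ∘ dlaw X = ceps F (G X);
  dlaw_epsilon : forall X, ceps G (F X) ∘ dlaw X = fmap F (ceps G X) }.
Arguments dlaw {C F G} d X.

Definition is_bicomodule (C : Category) (F G : Comonad C) (phi : DistLaw F G)
    (M : C) (th : Hom M (F M)) (rh : Hom M (G M)) : Prop :=
  is_comodule F th /\ is_comodule G rh /\
  dlaw phi M ∘ fmap F rh ∘ th = fmap G th ∘ rh.
Arguments is_bicomodule {C F G} phi {M} th rh.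

Definition is_bicomodule_map (C : Category) (F G : Comonad C) (phi : DistLaw F G)
    (X Y : C) (thX : Hom X (F X)) (rhX : Hom X (G X))
    (thY : Hom Y (F Y)) (rhY : Hom Y (G Y)) (f : Hom X Y) : Prop :=
  is_comodule_map thX thY f /\ is_comodule_map rhX rhY f.
Arguments is_bicomodule_map {C F G} phi {X Y} thX rhX thY rhY f.

Record Bicomod (C : Category) (F G : Comonad C) (phi : DistLaw F G) := {
  bob :> C;
  bth : Hom bob (F bob);
  brh : Hom bob (G bob);
  blaws : is_bicomodule phi bth brh }.
Arguments bth {C F G phi} b.
Arguments brh {C F G phi} b.

Record Bicomonad (C : MonoidalCategory) := {
  bcm :> Comonad C;
  bF2 : forall X Y : C, Hom (bcm X ⊗ bcm Y) (bcm (X ⊗ Y));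
  bF0 : Hom munit (bcm munit);
  bF2_nat : forall X X' Y Y' (f : Hom X X') (g : Hom Y Y'),
      fmap bcm (tensm f g) ∘ bF2 X Y = bF2 X' Y' ∘ tensm (fmap bcm f) (fmap bcm g);
  bF2_assoc : forall X Y Z : C,
      fmap bcm (assoc X Y Z) ∘ bF2 (X ⊗ Y) Z ∘ tensm (bF2 X Y) (idm (bcm Z))
      = bF2 X (Y ⊗ Z) ∘ tensm (idm (bcm X)) (bF2 Y Z) ∘ assoc (bcm X) (bcm Y) (bcm Z);
  bF0_l : forall X : C,
      fmap bcm (lunit X) ∘ bF2 munit X ∘ tensm bF0 (idm (bcm X)) = lunit (bcm X);
  bF0_r : forall X : C,
      fmap bcm (runit X) ∘ bF2 X munit ∘ tensm (idm (bcm X)) bF0 = runit (bcm X);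
  bdelta2 : forall X Y : C,
      fmap bcm (bF2 X Y) ∘ bF2 (bcm X) (bcm Y) ∘ tensm (cdelta bcm X) (cdelta bcm Y)
      = cdelta bcm (X ⊗ Y) ∘ bF2 X Y;
  beps2 : forall X Y : C,
      ceps bcm (X ⊗ Y) ∘ bF2 X Y = tensm (ceps bcm X) (ceps bcm Y);
  bdelta0 : fmap bcm bF0 ∘ bF0 = cdelta bcm munit ∘ bF0;
  beps0 : ceps bcm munit ∘ bF0 = idm munit }.
Arguments bF2 {C} b X Y.
Arguments bF0 {C} b.

Definition tens_coact (C : MonoidalCategory) (F : Bicomonad C) (X Y : C)
    (thX : Hom X (F X)) (thY : Hom Y (F Y)) : Hom (X ⊗ Y) (F (X ⊗ Y)) :=
  bF2 F X Y ∘ tensm thX thY.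
Arguments tens_coact {C} F {X Y} thX thY.

(* "(C^(F,G)(phi), ⊗, I, a, l, r) is a monoidal category with the structures
   described": the tensor product of phi-bicomodules (with the coactions
   tens_coact) and I (with F0, G0) are phi-bicomodules, the tensor product of
   bicomodule morphisms is a bicomodule morphism, and the components of
   a, l, r (and of their inverses) at bicomodules are bicomodule morphisms.
   Functoriality of ⊗, naturality, invertibility, pentagon and triangle are
   equations between the underlying morphisms of C, which hold in C. *)
Definition bicomod_monoidal (C : MonoidalCategory) (F G : Bicomonad C)
    (phi : DistLaw F G) : Prop :=
  let thT := fun (X Y : Bicomod phi) => tens_coact F (bth X) (bth Y) in
  let rhT := fun (X Y : Bicomod phi) => tens_coact G (brh X) (brh Y) in
  (forall X Y : Bicomod phi, is_bicomodule phi (thT X Y) (rhT X Y)) /\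
  is_bicomodule phi (bF0 F) (bF0 G) /\
  (forall (X X' Y Y' : Bicomod phi) (f : Hom (bob X) (bob X')) (g : Hom (bob Y) (bob Y')),
      is_bicomodule_map phi (bth X) (brh X) (bth X') (brh X') f ->
      is_bicomodule_map phi (bth Y) (brh Y) (bth Y') (brh Y') g ->
      is_bicomodule_map phi (thT X Y) (rhT X Y) (thT X' Y') (rhT X' Y') (tensm f g)) /\
  (forall X Y Z : Bicomod phi,
      is_bicomodule_map phi
        (tens_coact F (thT X Y) (bth Z)) (tens_coact G (rhT X Y) (brh Z))
        (tens_coact F (bth X) (thT Y Z)) (tens_coact G (brh X) (rhT Y Z))
        (assoc (bob X) (bob Y) (bob Z)) /\
      is_bicomodule_map phi
        (tens_coact F (bth X) (thT Y Z)) (tens_coact G (brh X) (rhT Y Z))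
        (tens_coact F (thT X Y) (bth Z)) (tens_coact G (rhT X Y) (brh Z))
        (assoc_inv (bob X) (bob Y) (bob Z))) /\
  (forall X : Bicomod phi,
      is_bicomodule_map phi
        (tens_coact F (bF0 F) (bth X)) (tens_coact G (bF0 G) (brh X))
        (bth X) (brh X) (lunit (bob X)) /\
      is_bicomodule_map phi
        (bth X) (brh X)
        (tens_coact F (bF0 F) (bth X)) (tens_coact G (bF0 G) (brh X))
        (lunit_inv (bob X))) /\
  (forall X : Bicomod phi,
      is_bicomodule_map phi
        (tens_coact F (bth X) (bF0 F)) (tens_coact G (brh X) (bF0 G))
        (bth X) (brh X) (runit (bob X)) /\
      is_bicomodule_map phi
        (bth X) (brh X)
        (tens_coact F (bth X) (bF0 F)) (tens_coact G (brh X) (bF0 G))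
        (runit_inv (bob X))).

(* Condition (a) is what lets the distributive law pass through F2 and G2, so
   under (a) the tensor product of two bicomodules is again one, while (b) is the
   compatibility condition of the unit; the constraint morphisms are comodule
   maps by the coherence axioms of the bicomonads.  Conversely, consider the
   cofree bicomodules F(GM), with coactions Δ and φ ∘ Fδ, and the counit
   e = ε ∘ ε : F(GM) -> M.  Then FG(e) ∘ Fρ ∘ θ is the identity and
   GF(e) ∘ Gθ ∘ ρ is φ_M, so applying GF(e ⊗ e) to the compatibility condition of
   F(GM) ⊗ F(GN) yields (a) at M, N. *)
From Stdlib Require Import Setoid.

Set Implicit Arguments.
Unset Strict Implicit.

Ltac lassoc := repeat rewrite comp_assoc.

Section Prefix.

Variable C : Category.
Variables A B D E Z : C.
Variable x : Hom E Z.

Lemma comp_eq_prefix2 (a : Hom D E) (b : Hom A D) (r : Hom A E) :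
  a ∘ b = r -> x ∘ a ∘ b = x ∘ r.
Proof. intros H. rewrite <- H. lassoc. reflexivity. Qed.

Lemma comp_eq_prefix3 (a : Hom D E) (b : Hom B D) (c : Hom A B) (r : Hom A E) :
  a ∘ b ∘ c = r -> x ∘ a ∘ b ∘ c = x ∘ r.
Proof. intros H. rewrite <- H. lassoc. reflexivity. Qed.

Lemma comp_eq_prefix4 (Y : C) (a : Hom D E) (b : Hom B D) (c : Hom Y B) (d : Hom A Y)
    (r : Hom A E) :
  a ∘ b ∘ c ∘ d = r -> x ∘ a ∘ b ∘ c ∘ d = x ∘ r.
Proof. intros H. rewrite <- H. lassoc. reflexivity. Qed.

End Prefix.

(* Composites are kept left-associated, so an equation whose left-hand side is
   itself a composite occurs in the goal only after some prefix [x]. *)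
Ltac rw H := lassoc;
  first [ rewrite H
        | lazymatch type of H with
          | _ ∘ _ ∘ _ ∘ _ = _ => rewrite (comp_eq_prefix4 _ H)
          | _ ∘ _ ∘ _ = _ => rewrite (comp_eq_prefix3 _ H)
          | _ ∘ _ = _ => rewrite (comp_eq_prefix2 _ H)
          end ]; lassoc.
Ltac rwb H := let H' := fresh in pose proof (eq_sym H) as H'; rw H'; clear H'.

Lemma comodule_map_inv (C : Category) (F : Comonad C) (X Y : C)
    (thX : Hom X (F X)) (thY : Hom Y (F Y)) (f : Hom X Y) (g : Hom Y X) :
  g ∘ f = idm X -> f ∘ g = idm Y ->
  is_comodule_map thX thY f -> is_comodule_map thY thX g.
Proof.
  unfold is_comodule_map; intros Hgf Hfg Hf.
  rewrite <- (comp_idr (fmap F g ∘ thY)), <- Hfg. lassoc.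
  rwb Hf. rwb (fmap_comp F g f). rewrite Hgf, fmap_id, comp_idl. reflexivity.
Qed.

Lemma bicomodule_map_inv (C : Category) (F G : Comonad C) (phi : DistLaw F G) (X Y : C)
    (thX : Hom X (F X)) (rhX : Hom X (G X)) (thY : Hom Y (F Y)) (rhY : Hom Y (G Y))
    (f : Hom X Y) (g : Hom Y X) :
  g ∘ f = idm X -> f ∘ g = idm Y ->
  is_bicomodule_map phi thX rhX thY rhY f -> is_bicomodule_map phi thY rhY thX rhX g.
Proof.
  intros Hgf Hfg [HF HG]. split; eapply comodule_map_inv; eassumption.
Qed.

Section MonoidalComodules.

Variable C : MonoidalCategory.
Variable F : Bicomonad C.

Lemma tens_coact_comodule (X Y : C) (thX : Hom X (F X)) (thY : Hom Y (F Y)) :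
  is_comodule F thX -> is_comodule F thY -> is_comodule F (tens_coact F thX thY).
Proof.
  intros [HX1 HX2] [HY1 HY2]; unfold tens_coact; split.
  - rewrite fmap_comp. rw (bF2_nat F thX thY).
    rwb (tensm_comp thX (fmap F thX) thY (fmap F thY)).
    rewrite HX1, HY1, tensm_comp. rw (bdelta2 F X Y). reflexivity.
  - rw (beps2 F X Y). rewrite <- tensm_comp, HX2, HY2, tensm_id. reflexivity.
Qed.

Lemma unit_comodule : is_comodule F (bF0 F).
Proof. split; [apply bdelta0 | apply beps0]. Qed.

Lemma tensm_comodule_map (X X' Y Y' : C) (thX : Hom X (F X)) (thY : Hom Y (F Y))
    (thX' : Hom X' (F X')) (thY' : Hom Y' (F Y')) (f : Hom X X') (g : Hom Y Y') :
  is_comodule_map thX thX' f -> is_comodule_map thY thY' g ->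
  is_comodule_map (tens_coact F thX thY) (tens_coact F thX' thY') (tensm f g).
Proof.
  unfold is_comodule_map, tens_coact; intros Hf Hg.
  rw (bF2_nat F f g). rewrite <- !comp_assoc, <- !tensm_comp, Hf, Hg. reflexivity.
Qed.

Lemma assoc_comodule_map (X Y Z : C)
    (thX : Hom X (F X)) (thY : Hom Y (F Y)) (thZ : Hom Z (F Z)) :
  is_comodule_map (tens_coact F (tens_coact F thX thY) thZ)
                  (tens_coact F thX (tens_coact F thY thZ)) (assoc X Y Z).
Proof.
  unfold is_comodule_map, tens_coact.
  rewrite <- (comp_idl thX) at 2. rewrite <- (comp_idl thZ) at 1.
  rewrite !tensm_comp. lassoc.
  rwb (assoc_nat thX thY thZ). rwb (bF2_assoc F X Y Z). reflexivity.
Qed.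

Lemma lunit_comodule_map (X : C) (thX : Hom X (F X)) :
  is_comodule_map (tens_coact F (bF0 F) thX) thX (lunit X).
Proof.
  unfold is_comodule_map, tens_coact.
  rewrite <- (comp_idl thX) at 1. rewrite <- (comp_idr (bF0 F)), tensm_comp.
  rw (bF0_l F X). rewrite lunit_nat. reflexivity.
Qed.

Lemma runit_comodule_map (X : C) (thX : Hom X (F X)) :
  is_comodule_map (tens_coact F thX (bF0 F)) thX (runit X).
Proof.
  unfold is_comodule_map, tens_coact.
  rewrite <- (comp_idl thX) at 1. rewrite <- (comp_idr (bF0 F)), tensm_comp.
  rw (bF0_r F X). rewrite runit_nat. reflexivity.
Qed.

End MonoidalComodules.

Section CompositeMonoidal.

Variable C : MonoidalCategory.

Lemma fmap_tens_coact (F G : Bicomonad C) (X Y : C) (thX : Hom X (F X)) (thY : Hom Y (F Y))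
    (rhX : Hom X (G X)) (rhY : Hom Y (G Y)) :
  fmap F (tens_coact G rhX rhY) ∘ tens_coact F thX thY
  = fmap F (bF2 G X Y) ∘ bF2 F (G X) (G Y) ∘ tensm (fmap F rhX ∘ thX) (fmap F rhY ∘ thY).
Proof.
  unfold tens_coact. rewrite fmap_comp, tensm_comp. lassoc.
  rw (bF2_nat F rhX rhY). reflexivity.
Qed.

Lemma bF2_comp_nat (F G : Bicomonad C) (M M' N N' : C) (f : Hom M M') (g : Hom N N') :
  fmap F (fmap G (tensm f g)) ∘ fmap F (bF2 G M N) ∘ bF2 F (G M) (G N)
  = fmap F (bF2 G M' N') ∘ bF2 F (G M') (G N') ∘ tensm (fmap F (fmap G f)) (fmap F (fmap G g)).
Proof.
  rewrite <- fmap_comp, bF2_nat, fmap_comp. lassoc. rw (bF2_nat F (fmap G f) (fmap G g)).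
  reflexivity.
Qed.

End CompositeMonoidal.

Section DistributiveLaw.

Variable C : MonoidalCategory.
Variables F G : Bicomonad C.
Variable phi : DistLaw F G.

Definition dlaw_bF2_compat (M N : C) : Prop :=
  dlaw phi (M ⊗ N) ∘ fmap F (bF2 G M N) ∘ bF2 F (G M) (G N)
  = fmap G (bF2 F M N) ∘ bF2 G (F M) (F N) ∘ tensm (dlaw phi M) (dlaw phi N).

Lemma tens_compatible_iff (X Y : C) (thX : Hom X (F X)) (thY : Hom Y (F Y))
    (rhX : Hom X (G X)) (rhY : Hom Y (G Y)) :
  dlaw phi (X ⊗ Y) ∘ fmap F (tens_coact G rhX rhY) ∘ tens_coact F thX thY
    = fmap G (tens_coact F thX thY) ∘ tens_coact G rhX rhY <->
  dlaw phi (X ⊗ Y) ∘ fmap F (bF2 G X Y) ∘ bF2 F (G X) (G Y)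
       ∘ tensm (fmap F rhX ∘ thX) (fmap F rhY ∘ thY)
    = fmap G (bF2 F X Y) ∘ bF2 G (F X) (F Y) ∘ tensm (fmap G thX ∘ rhX) (fmap G thY ∘ rhY).
Proof.
  rewrite <- (comp_assoc (dlaw phi (X ⊗ Y))), !fmap_tens_coact. lassoc. reflexivity.
Qed.

Lemma tens_bicomodule
    (Ha : forall M N : C, dlaw_bF2_compat M N)
    (X Y : C) (thX : Hom X (F X)) (thY : Hom Y (F Y))
    (rhX : Hom X (G X)) (rhY : Hom Y (G Y)) :
  is_bicomodule phi thX rhX -> is_bicomodule phi thY rhY ->
  is_bicomodule phi (tens_coact F thX thY) (tens_coact G rhX rhY).
Proof.
  intros [HFX [HGX HX]] [HFY [HGY HY]].
  split; [|split]; try apply tens_coact_comodule; try assumption.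
  apply tens_compatible_iff. rewrite (Ha X Y), <- comp_assoc, <- tensm_comp, !comp_assoc, HX, HY.
  reflexivity.
Qed.

Definition cofree_coact (M : C) : Hom (F (G M)) (G (F (G M))) :=
  dlaw phi (G M) ∘ fmap F (cdelta G M).

Lemma cofree_is_bicomodule (M : C) : is_bicomodule phi (cdelta F (G M)) (cofree_coact M).
Proof.
  unfold cofree_coact; split; [|split].
  - split; [apply ccoassoc | apply ccounit_r].
  - split.
    + rewrite fmap_comp. lassoc. rwb (dlaw_nat phi (cdelta G M)).
      rwb (fmap_comp F (fmap G (cdelta G M)) (cdelta G M)). rewrite ccoassoc, fmap_comp. lassoc.
      rw (dlaw_delta phi (G M)). reflexivity.
    + rw (dlaw_epsilon phi (G M)). rewrite <- fmap_comp, ccounit_r, fmap_id. reflexivity.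
  - rewrite fmap_comp. lassoc. rwb (cdelta_nat F (cdelta G M)). rw (dlaw_Delta phi (G M)).
    reflexivity.
Qed.

Definition cofree (M : C) : Bicomod phi := Build_Bicomod (cofree_is_bicomodule M).

Definition cofree_counit (M : C) : Hom (F (G M)) M := ceps G M ∘ ceps F (G M).

Lemma cofree_counit_FG (M : C) :
  fmap F (fmap G (cofree_counit M)) ∘ (fmap F (cofree_coact M) ∘ cdelta F (G M)) = idm _.
Proof.
  assert (Hcounit : fmap G (cofree_counit M) ∘ cofree_coact M = ceps F (G M)).
  { unfold cofree_counit, cofree_coact. rewrite fmap_comp. lassoc.
    rw (dlaw_varepsilon phi (G M)). rw (ceps_nat F (cdelta G M)).
    rewrite ccounit_l, comp_idl. reflexivity. }
  rewrite comp_assoc, <- fmap_comp, Hcounit. apply ccounit_l.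
Qed.

Lemma cofree_counit_GF (M : C) :
  fmap G (fmap F (cofree_counit M)) ∘ (fmap G (cdelta F (G M)) ∘ cofree_coact M) = dlaw phi M.
Proof.
  assert (Hcounit : fmap F (cofree_counit M) ∘ cdelta F (G M) = fmap F (ceps G M)).
  { unfold cofree_counit. rewrite fmap_comp, <- comp_assoc, ccounit_l. apply comp_idr. }
  rewrite comp_assoc, <- fmap_comp, Hcounit. unfold cofree_coact. lassoc.
  rwb (dlaw_nat phi (ceps G M)).
  rewrite <- comp_assoc, <- fmap_comp, ccounit_l, fmap_id. apply comp_idr.
Qed.

Lemma dlaw_bF2_of_cofree (M N : C) :
  is_bicomodule phi (tens_coact F (bth (cofree M)) (bth (cofree N)))
                    (tens_coact G (brh (cofree M)) (brh (cofree N))) ->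
  dlaw_bF2_compat M N.
Proof.
  intros [_ [_ Hcompat]]. apply tens_compatible_iff in Hcompat. cbn in Hcompat.
  unfold dlaw_bF2_compat.
  transitivity (dlaw phi (M ⊗ N) ∘ fmap F (bF2 G M N) ∘ bF2 F (G M) (G N)
    ∘ tensm (fmap F (fmap G (cofree_counit M)) ∘ (fmap F (cofree_coact M) ∘ cdelta F (G M)))
            (fmap F (fmap G (cofree_counit N)) ∘ (fmap F (cofree_coact N) ∘ cdelta F (G N)))).
  { rewrite !cofree_counit_FG, tensm_id, comp_idr. reflexivity. }
  rewrite (tensm_comp (fmap F (cofree_coact M) ∘ cdelta F (G M))). lassoc.
  rwb (bF2_comp_nat F G (cofree_counit M) (cofree_counit N)).
  rw (dlaw_nat phi (tensm (cofree_counit M) (cofree_counit N))).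
  rw Hcompat. rw (bF2_comp_nat G F (cofree_counit M) (cofree_counit N)).
  rewrite <- comp_assoc, <- tensm_comp, !cofree_counit_GF. reflexivity.
Qed.

Lemma bicomod_monoidal_of_compat
    (Ha : forall M N : C, dlaw_bF2_compat M N)
    (Hb : dlaw phi munit ∘ fmap F (bF0 G) ∘ bF0 F = fmap G (bF0 F) ∘ bF0 G) :
  bicomod_monoidal phi.
Proof.
  split; [|split; [|split; [|split; [|split]]]].
  - intros X Y. apply tens_bicomodule; [exact Ha | apply blaws | apply blaws].
  - split; [|split]; [apply unit_comodule | apply unit_comodule | exact Hb].
  - intros X X' Y Y' f g [HfF HfG] [HgF HgG]. split; apply tensm_comodule_map; assumption.
  - intros X Y Z. split; [|apply bicomodule_map_inv with (assoc _ _ _);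
      [apply assoc_iso1 | apply assoc_iso2 |]]; split; apply assoc_comodule_map.
  - intros X. split; [|apply bicomodule_map_inv with (lunit _);
      [apply lunit_iso1 | apply lunit_iso2 |]]; split; apply lunit_comodule_map.
  - intros X. split; [|apply bicomodule_map_inv with (runit _);
      [apply runit_iso1 | apply runit_iso2 |]]; split; apply runit_comodule_map.
Qed.

End DistributiveLaw.

Theorem lemma3p1 (C : MonoidalCategory) (F G : Bicomonad C) (phi : DistLaw F G) :
  bicomod_monoidal phi <->
  ((forall M N : C,
      dlaw phi (M ⊗ N) ∘ fmap F (bF2 G M N) ∘ bF2 F (G M) (G N)
      = fmap G (bF2 F M N) ∘ bF2 G (F M) (F N) ∘ tensm (dlaw phi M) (dlaw phi N)) /\
   dlaw phi munit ∘ fmap F (bF0 G) ∘ bF0 F = fmap G (bF0 F) ∘ bF0 G).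
Proof.
  split.
  - intros [Htens [[_ [_ Hunit]] _]]. split; [|exact Hunit].
    intros M N. apply dlaw_bF2_of_cofree, (Htens (cofree phi M) (cofree phi N)).
  - intros [Ha Hb]. exact (bicomod_monoidal_of_compat Ha Hb).
Qed.
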